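(* Let $\mathcal{X}$ be a discrete set, $\mathcal{P}$ a distribution over $\mathcal{X}$, and $\mathcal{A}$ an $(\varepsilon,0)$-differentially private randomized algorithm that on input a dataset in $\mathcal{X}^n$ outputs a function from $\mathcal{X}$ to $[0,1]$. Let $\mathbf{S},\mathbf{T}$ be independent random variables each distributed according to $\mathcal{P}^n$, and let $\boldsymbol{\phi}=\mathcal{A}(\mathbf{S})$. Then for every positive integer $k$ and every function $\psi:\mathcal{X}\to[0,1]$ in the support of $\mathcal{A}(\mathbf{S})$, $$\mathbb{E}\left[\mathcal{E}_{\mathbf{S}}[\boldsymbol{\phi}]^k \,\middle|\, \boldsymbol{\phi}=\psi\right]\le e^{k\varepsilon}\cdot\mathbb{E}\left[\mathcal{E}_{\mathbf{T}}[\psi]^k\right].$$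
   Context: For a dataset $S=(x_1,\dots,x_n)$ and $\psi:\mathcal{X}\to[0,1]$, $\mathcal{E}_S[\psi]=\frac1n\sum_{i=1}^n\psi(x_i)$. Two datasets in $\mathcal{X}^n$ are adjacent if they differ in a single element. A randomized algorithm $\mathcal{A}$ with domain $\mathcal{X}^n$ is $(\varepsilon,\delta)$-differentially private if for every set $\mathcal{S}$ of outputs and every pair of adjacent datasets $x,y$, $\Pr[\mathcal{A}(x)\in\mathcal{S}]\le e^{\varepsilon}\Pr[\mathcal{A}(y)\in\mathcal{S}]+\delta$ (probability over the coins of $\mathcal{A}$). *)

From HB Require Import structures.
From mathcomp Require Import all_boot all_order all_algebra.
From mathcomp Require Import all_classical all_reals.
From mathcomp Require Import ereal sequences esum exp.
Set Implicit Arguments. Unset Strict Implicit. Unset Printing Implicit Defensive.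
Import Order.TTheory GRing.Theory Num.Theory.
Local Open Scope classical_set_scope.
Local Open Scope ring_scope.

Section DPDefs.
Variables (R : realType) (X : choiceType) (n : nat).

Definition is_distr (T : choiceType) (p : T -> R) : Prop :=
  (forall t, 0 <= p t) /\ (\esum_(t in [set: T]) (p t)%:E = 1)%E.

Definition prob (T : choiceType) (p : T -> R) (E : set T) : \bar R :=
  (\esum_(t in E) (p t)%:E)%E.

Definition prodP (P : X -> R) (s : n.-tuple X) : R :=
  \prod_(i < n) P (tnth s i).

Definition empavg (s : n.-tuple X) (psi : X -> R) : R :=
  (\sum_(i < n) psi (tnth s i)) / n%:R.

(* A randomized algorithm from X^n to functions X -> [0,1]: for each dataset
   s, A s is the (discrete) output distribution, with A s f = Pr[A(s) = f]. *)
Definition rand_alg (A : n.-tuple X -> (X -> R) -> R) : Prop :=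
  (forall s, is_distr (A s)) /\
  (forall s f, A s f != 0 -> forall a, 0 <= f a <= 1).

Definition adjacent (x y : n.-tuple X) : Prop :=
  exists i : 'I_n, forall j : 'I_n, j != i -> tnth x j = tnth y j.

Definition differentially_private (eps delta : R)
    (A : n.-tuple X -> (X -> R) -> R) : Prop :=
  forall (O : set (X -> R)) (x y : n.-tuple X), adjacent x y ->
    (prob (A x) O <= (expR eps)%:E * prob (A y) O + delta%:E)%E.

(* S ~ P^n and phi = A(S) (algorithm coins independent of S):
   Pr[phi = psi] = sum_s P^n(s) A(s)(psi). *)
Definition pr_out (P : X -> R) (A : n.-tuple X -> (X -> R) -> R)
    (psi : X -> R) : \bar R :=
  (\esum_(s in [set: n.-tuple X]) (prodP P s * A s psi)%:E)%E.

(* E[ E_S[phi]^k * 1{phi = psi} ] *)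
Definition exp_on_out (P : X -> R) (A : n.-tuple X -> (X -> R) -> R)
    (k : nat) (psi : X -> R) : \bar R :=
  (\esum_(s in [set: n.-tuple X])
     (prodP P s * A s psi * empavg s psi ^+ k)%:E)%E.

(* Conditional expectation E[ E_S[phi]^k | phi = psi ] (elementary
   conditioning on an event of positive probability). *)
Definition cond_moment (P : X -> R) (A : n.-tuple X -> (X -> R) -> R)
    (k : nat) (psi : X -> R) : R :=
  fine (exp_on_out P A k psi) / fine (pr_out P A psi).

Definition moment (P : X -> R) (k : nat) (psi : X -> R) : R :=
  fine (\esum_(t in [set: n.-tuple X]) (prodP P t * empavg t psi ^+ k)%:E)%E.

End DPDefs.

(* Expanding E_S[psi]^k = n^-k \sum_f \prod_j psi(S_(f j)) over all maps
   f : [k] -> [n] reduces the claim to a single monomial G(S), which depends only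
   on the at most k coordinates J = f([k]) of S.  Couple S with an independent
   T ~ P^n and exchange their J-coordinates: this preserves P^n x P^n, turns G(S)
   into G(T), and moves the dataset fed to A in at most k positions, so group
   privacy costs a factor e^(k eps).  Hence
     E[G(S) 1{A(S) = psi}] <= e^(k eps) Pr[A(S) = psi] E[G(T)],
   and summing over f and dividing by Pr[A(S) = psi] gives the bound. *)

From Pilot Require Import Defs.
From HB Require Import structures.
From mathcomp Require Import all_boot all_order all_algebra.
From mathcomp Require Import all_classical all_reals.
From mathcomp Require Import ereal sequences esum exp.
Set Implicit Arguments. Unset Strict Implicit. Unset Printing Implicit Defensive.
Import Order.TTheory GRing.Theory Num.Theory.
Local Open Scope classical_set_scope.
Local Open Scope ring_scope.

Section ESum.
Variables (R : realType) (T : choiceType).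
Implicit Types (S : set T) (a : T -> \bar R).

Lemma esumZl S (c : R) a : 0 <= c -> (forall x, S x -> (0 <= a x)%E) ->
  (\esum_(i in S) (c%:E * a i) = c%:E * \esum_(i in S) a i)%E.
Proof.
move=> c0 a0; rewrite /esum -ereal_supZl //; last first.
  by apply/set0P; exists 0%E; exists set0; [exact: fsets_set0|rewrite fsbig_set0].
congr ereal_sup; rewrite image_comp; apply: eq_imagel => F [finF FS] /=.
rewrite !fsbig_finite // big_seq [in RHS]big_seq ge0_sume_distrr // => i.
by rewrite in_fset_set // inE => /FS /a0.
Qed.

Lemma esumZr_fin_num S (c : \bar R) a : c \is a fin_num -> (0 <= c)%E ->
  (forall x, S x -> (0 <= a x)%E) ->
  (\esum_(i in S) (a i * c) = (\esum_(i in S) a i) * c)%E.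
Proof.
move=> cfin c0 a0; rewrite -(fineK cfin) muleC -esumZl ?fine_ge0 //.
by apply: eq_esum => x _; rewrite muleC.
Qed.

Lemma esum_ge_term S a x : S x -> (forall y, S y -> (0 <= a y)%E) ->
  (a x <= \esum_(i in S) a i)%E.
Proof.
move=> Sx a0; apply: esum_ge; exists [set x]; last by rewrite fsbig_set1.
by split; [exact: finite_set1 | move=> y ->].
Qed.

Lemma is_distr_le1 (p : T -> R) t : is_distr p -> p t <= 1.
Proof.
by case=> p0 p1; rewrite -lee_fin -p1; apply: esum_ge_term => // y _; rewrite lee_fin.
Qed.

Lemma is_distr_inhabited (p : T -> R) : is_distr p -> inhabited T.
Proof.
case=> _ p1; case: (pselect (inhabited T)) => // nT.
have ET : [set: T] = set0 by apply/seteqP; split => // t _; apply: nT.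
by move: p1; rewrite ET esum_set0 => /(congr1 fine) /= /eqP; rewrite eq_sym oner_eq0.
Qed.

End ESum.

Section Hybrid.
Variables (T : Type) (n : nat).
Implicit Types (J : {set 'I_n}) (s t : n.-tuple T).

Definition hyb J s t : n.-tuple T :=
  [tuple if i \in J then tnth t i else tnth s i | i < n].

Lemma tnth_hyb J s t i :
  tnth (hyb J s t) i = if i \in J then tnth t i else tnth s i.
Proof. by rewrite tnth_mktuple. Qed.

Lemma hybK J s t : hyb J (hyb J s t) (hyb J t s) = s.
Proof. by apply: eq_from_tnth => i; rewrite !tnth_hyb; case: (i \in J). Qed.

End Hybrid.

Section ProductDistribution.
Variables (R : realType) (X : choiceType) (P : X -> R).
Hypothesis hP : is_distr P.

Lemma prodP_ge0 n (s : n.-tuple X) : 0 <= prodP P s.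
Proof. by apply: prodr_ge0 => i _; case: hP. Qed.

Lemma prodP_cons n x (t : n.-tuple X) :
  prodP P [tuple of x :: t] = P x * prodP P t.
Proof.
by rewrite /prodP big_ord_recl; congr (_ * _); apply: eq_bigr => i _; rewrite tnthS.
Qed.

Lemma prodP_hyb n (J : {set 'I_n}) (s t : n.-tuple X) :
  prodP P (hyb J s t) * prodP P (hyb J t s) = prodP P s * prodP P t.
Proof.
rewrite /prodP -!big_split /=; apply: eq_bigr => i _.
by rewrite !tnth_hyb; case: (i \in J) => //; rewrite mulrC.
Qed.

Lemma esum_prodP n : (\esum_(t in [set: n.-tuple X]) (prodP P t)%:E = 1)%E.
Proof.
elim: n => [|n IH].
  rewrite (_ : [set: 0.-tuple X] = [set [tuple]]); last first.
    by apply/seteqP; split => t //= _; rewrite tuple0.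
  by rewrite esum_set1 /prodP big_ord0.
pose cons (z : X * n.-tuple X) := [tuple of z.1 :: z.2].
have -> : [set: n.+1.-tuple X] = cons @` ([set: X] `*`` (fun=> [set: n.-tuple X])).
  apply/seteqP; split => t // _; exists (thead t, behead_tuple t) => //.
  by rewrite [RHS]tuple_eta.
rewrite esum_image; last by move=> [x1 t1] [x2 t2] _ _ [-> /val_inj ->].
rewrite -(esum_esum (I := [set: X]) (J := fun=> [set: n.-tuple X])
    (a := fun x t => (prodP P (cons (x, t)))%:E)); last first.
  by move=> x t _ _; rewrite lee_fin prodP_ge0.
rewrite -(proj2 hP); apply: eq_esum => x _.
under eq_esum do rewrite prodP_cons /= EFinM.
by rewrite esumZl ?IH ?mule1 //; [case: hP | move=> t _; rewrite lee_fin prodP_ge0].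
Qed.

Section Mean.
Variable n : nat.
Local Notation T := (n.-tuple X).
Implicit Types (w : T -> R).

Definition meanP w : \bar R := (\esum_(s in [set: T]) (prodP P s * w s)%:E)%E.

Definition pair_meanP (F : T -> T -> R) : \bar R :=
  (\esum_(z in [set: T] `*`` (fun=> [set: T]))
    (prodP P z.1 * prodP P z.2 * F z.1 z.2)%:E)%E.

Lemma meanP_ge0 w : (forall s, 0 <= w s) -> (0 <= meanP w)%E.
Proof. by move=> w0; apply: esum_ge0 => s _; rewrite lee_fin mulr_ge0 ?prodP_ge0. Qed.

Lemma meanP1 : meanP (fun=> 1) = 1%E.
Proof. by rewrite -(esum_prodP n); apply: eq_esum => s _; rewrite mulr1. Qed.

Lemma meanP_le1 w : (forall s, w s <= 1) -> (meanP w <= 1)%E.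
Proof.
move=> w1; rewrite -(esum_prodP n); apply: le_esum => s _.
by rewrite lee_fin ler_piMr ?prodP_ge0.
Qed.

Lemma meanP_fin_num w : (forall s, 0 <= w s <= 1) -> meanP w \is a fin_num.
Proof.
move=> w01; rewrite ge0_fin_numE; last first.
  by apply: meanP_ge0 => s; case/andP: (w01 s).
by apply: le_lt_trans (meanP_le1 _) (ltey _) => s; case/andP: (w01 s).
Qed.

Lemma meanPZ (c : R) w : 0 <= c -> (forall s, 0 <= w s) ->
  meanP (fun s => c * w s) = (c%:E * meanP w)%E.
Proof.
move=> c0 w0; rewrite -esumZl //; last first.
  by move=> s _; rewrite lee_fin mulr_ge0 ?prodP_ge0.
by apply: eq_esum => s _; rewrite -EFinM mulrCA.
Qed.

Lemma meanP_sum (I : finType) (F : I -> T -> R) : (forall i s, 0 <= F i s) ->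
  meanP (fun s => \sum_i F i s) = (\sum_i meanP (F i))%E.
Proof.
move=> F0; rewrite /meanP; under eq_esum do rewrite mulr_sumr -sumEFin.
by rewrite esum_sum // => s i _ _; rewrite lee_fin mulr_ge0 ?prodP_ge0.
Qed.

Lemma pair_meanPM (a b : T -> R) :
  (forall s, 0 <= a s) -> (forall t, 0 <= b t <= 1) ->
  pair_meanP (fun s t => a s * b t) = (meanP a * meanP b)%E.
Proof.
move=> a0 b01; have b0 t : 0 <= b t by case/andP: (b01 t).
rewrite /pair_meanP
  -(esum_esum (a := fun s t => (prodP P s * prodP P t * (a s * b t))%:E)); last first.
  by move=> s t _ _; rewrite lee_fin !mulr_ge0 ?prodP_ge0.
rewrite /meanP -esumZr_fin_num ?meanP_fin_num ?meanP_ge0 //; last first.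
  by move=> s _; rewrite lee_fin mulr_ge0 ?prodP_ge0.
apply: eq_esum => s _; rewrite -[in RHS]esumZl ?mulr_ge0 ?prodP_ge0 //; last first.
  by move=> t _; rewrite lee_fin mulr_ge0 ?prodP_ge0.
by apply: eq_esum => t _; rewrite -EFinM mulrACA.
Qed.

Lemma pair_meanP_hyb (J : {set 'I_n}) (F : T -> T -> R) :
  pair_meanP F = pair_meanP (fun s t => F (hyb J s t) (hyb J t s)).
Proof.
pose swap (z : T * T) := (hyb J z.1 z.2, hyb J z.2 z.1).
have swapK : involutive swap by case=> s t; rewrite /swap /= !hybK.
set D := [set: T] `*`` (fun=> [set: T]).
rewrite /pair_meanP (reindex_esum D D swap); last first.
  split; first by [].
    exact: (in2W (inv_inj swapK)).
  by move=> z _; exists (swap z); rewrite ?swapK.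
by apply: eq_esum => -[s t] _; rewrite /= prodP_hyb.
Qed.

Lemma le_pair_meanP (F G : T -> T -> R) : (forall s t, F s t <= G s t) ->
  (pair_meanP F <= pair_meanP G)%E.
Proof.
by move=> FG; apply: le_esum => z _; rewrite lee_fin ler_wpM2l ?mulr_ge0 ?prodP_ge0.
Qed.

Lemma meanP_hyb_le (J : {set 'I_n}) (c : R) (a G : T -> R) :
  0 <= c -> (forall s, 0 <= a s) -> (forall s, 0 <= G s <= 1) ->
  (forall s t, (forall i, i \notin J -> tnth s i = tnth t i) -> a s <= c * a t) ->
  (forall s t, (forall i, i \in J -> tnth s i = tnth t i) -> G s = G t) ->
  (meanP (fun s => (a s * G s)%R) <= c%:E * meanP a * meanP G)%E.
Proof.
move=> c0 a0 G01 a_le G_eq; have G0 s : 0 <= G s by case/andP: (G01 s).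
(* Couple [s] with an independent copy [t] and swap their [J]-coordinates:
   [G] then only sees [t], while [a] sees a dataset differing from [s] only on [J]. *)
have -> : meanP (fun s => a s * G s) = pair_meanP (fun s t => a s * G s * 1).
  by rewrite pair_meanPM ?meanP1 ?mule1 ?lexx ?ler01 // => s; rewrite mulr_ge0.
rewrite (pair_meanP_hyb J) -meanPZ // -pair_meanPM // => [|s]; last by rewrite mulr_ge0.
apply: le_pair_meanP => s t /=; rewrite mulr1.
have -> : G (hyb J s t) = G t by apply: G_eq => i iJ; rewrite tnth_hyb iJ.
by rewrite ler_wpM2r // a_le // => i iJ; rewrite tnth_hyb (negPf iJ).
Qed.

End Mean.
End ProductDistribution.

Section GroupPrivacy.
Variables (R : realType) (X : choiceType) (n : nat).
Variables (A : n.-tuple X -> (X -> R) -> R) (eps : R).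
Hypotheses (hA : rand_alg A) (hdp : differentially_private eps 0 A).

Lemma rand_alg_ge0 s f : 0 <= A s f.
Proof. by case: hA => /(_ s) []. Qed.

Lemma rand_alg_le1 s f : A s f <= 1.
Proof. by case: hA => /(_ s) /is_distr_le1. Qed.

Lemma dp_le x y f : Defs.adjacent x y -> A x f <= expR eps * A y f.
Proof.
move=> xy; have := hdp [set f] xy.
by rewrite /prob !esum_set1 ?lee_fin ?rand_alg_ge0 // addr0.
Qed.

Lemma dp_group (J : {set 'I_n}) x y f :
  (forall i, i \notin J -> tnth x i = tnth y i) ->
  A x f <= expR (#|J|%:R * eps) * A y f.
Proof.
move cJ : #|J| => m; elim: m J x y cJ => [|m IH] J x y cJ xy.
  have -> : x = y by apply: eq_from_tnth => i; apply: xy; rewrite (cards0_eq cJ) inE.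
  by rewrite mul0r expR0 mul1r.
have [j jJ] : exists j, j \in J by apply/card_gt0P; rewrite cJ.
pose z := hyb [set j] x y.
have xz : Defs.adjacent x z by exists j => i ij; rewrite tnth_hyb inE (negPf ij).
have zy i : i \notin J :\ j -> tnth z i = tnth y i.
  rewrite tnth_hyb !inE negb_and negbK; case: eqP => [-> //| _ /= iJ].
  exact: xy.
have cJj : #|J :\ j| = m by move: cJ; rewrite (cardsD1 j J) jJ => -[].
apply: le_trans (dp_le f xz) _.
rewrite -natr1 mulrDl mul1r addrC expRD -mulrA ler_wpM2l ?expR_ge0 //.
exact: IH cJj zy.
Qed.

Lemma dp_eps_ge0 : (0 < n)%N -> inhabited X -> 0 <= eps.
Proof.
move=> n0 [x0]; pose s := [tuple x0 | i < n].
have ss : Defs.adjacent s s by exists (Ordinal n0).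
have := hdp [set: X -> R] ss.
rewrite /prob (proj2 (proj1 hA s)) adde0 mule1 lee_fin.
by rewrite -[X in X <= _]expR0 ler_expR.
Qed.

End GroupPrivacy.

Section EmpiricalMoments.
Variables (R : realType) (X : choiceType) (n : nat) (psi : X -> R).
Hypothesis psi01 : forall a, 0 <= psi a <= 1.

Definition psi_monomial k (f : {ffun 'I_k -> 'I_n}) (s : n.-tuple X) : R :=
  \prod_(j < k) psi (tnth s (f j)).

Lemma psi_monomial01 k (f : {ffun 'I_k -> 'I_n}) s : 0 <= psi_monomial f s <= 1.
Proof.
apply/andP; split.
  by apply: prodr_ge0 => j _; case/andP: (psi01 (tnth s (f j))).
by apply: prodr_ile1 => j _; exact: psi01.
Qed.

Lemma empavg01 (s : n.-tuple X) : 0 <= empavg s psi <= 1.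
Proof.
have psi0 a : 0 <= psi a by case/andP: (psi01 a).
rewrite /empavg divr_ge0 ?sumr_ge0 //=.
case: n s => [|m] s; first by rewrite invr0 mulr0.
rewrite ler_pdivrMr ?ltr0n // mul1r.
apply: (@le_trans _ _ (\sum_(i < m.+1) (1 : R))); last by rewrite sumr_const card_ord.
by apply: ler_sum => i _; case/andP: (psi01 (tnth s i)).
Qed.

Lemma empavg_expn k (s : n.-tuple X) : empavg s psi ^+ k =
  \sum_(f : {ffun 'I_k -> 'I_n}) n%:R^-1 ^+ k * psi_monomial f s.
Proof.
rewrite -mulr_sumr /empavg mulrC exprMn; congr (_ * _).
by rewrite -[in LHS](card_ord k) -prodr_const bigA_distr_bigA.
Qed.

End EmpiricalMoments.

Lemma fine_div_le (R : realType) (c : R) (x y z : \bar R) :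
  x \is a fin_num -> y \is a fin_num -> z \is a fin_num -> (0 < y)%E ->
  (x <= c%:E * y * z)%E -> fine x / fine y <= c * fine z.
Proof.
case: x y z => [x||] [y||] [z||] // _ _ _; rewrite lte_fin -!EFinM lee_fin /= => y0 h.
by rewrite ler_pdivrMr // mulrAC.
Qed.

Section Moments.
Variables (R : realType) (X : choiceType) (n : nat) (P : X -> R).
Variables (A : n.-tuple X -> (X -> R) -> R) (eps : R) (psi : X -> R).
Hypotheses (hP : is_distr P) (hA : rand_alg A) (hdp : differentially_private eps 0 A).
Hypothesis psi01 : forall a, 0 <= psi a <= 1.
Variable k : nat.
Hypothesis k_gt0 : (0 < k)%N.

Lemma meanP_psi_monomial_le (f : {ffun 'I_k -> 'I_n}) :
  (meanP P (fun s => (A s psi * psi_monomial psi f s)%R) <=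
   (expR (k%:R * eps))%:E * pr_out P A psi * meanP P (psi_monomial psi f))%E.
Proof.
pose J := [set f j | j : 'I_k].
have eps0 : 0 <= eps.
  apply: (dp_eps_ge0 hA hdp); last exact: is_distr_inhabited hP.
  exact: leq_ltn_trans (leq0n _) (ltn_ord (f (Ordinal k_gt0))).
apply: le_trans (meanP_hyb_le hP (J := J) (c := expR (#|J|%:R * eps)) _ _ _ _ _) _.
- exact: expR_ge0.
- by move=> s; exact: (rand_alg_ge0 hA).
- exact: psi_monomial01.
- by move=> s t st; apply: dp_group.
- by move=> s t st; apply: eq_bigr => j _; rewrite st // imset_f.
rewrite lee_wpmul2r ?lee_wpmul2r ?lee_fin ?ler_expR ?ler_wpM2r ?ler_nat //.
- by apply: (meanP_ge0 hP) => s; case/andP: (psi_monomial01 psi01 f s).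
- by apply: (meanP_ge0 hP) => s; exact: (rand_alg_ge0 hA).
- by apply: leq_trans (leq_imset_card _ _) _; rewrite card_ord.
Qed.

Lemma exp_on_out_meanP :
  exp_on_out P A k psi = meanP P (fun s => (A s psi * empavg s psi ^+ k)%R).
Proof. by apply: eq_esum => s _; rewrite mulrA. Qed.

Lemma meanP_empavg_expn (w : n.-tuple X -> R) : (forall s, 0 <= w s) ->
  meanP P (fun s => (w s * empavg s psi ^+ k)%R) =
  (\sum_(f : {ffun 'I_k -> 'I_n})
     (n%:R^-1 ^+ k)%:E * meanP P (fun s => (w s * psi_monomial psi f s)%R))%E.
Proof.
move=> w0; have c0 : 0 <= n%:R^-1 ^+ k :> R by rewrite exprn_ge0 ?invr_ge0.
have m0 (f : {ffun 'I_k -> 'I_n}) s : 0 <= w s * psi_monomial psi f s.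
  by rewrite mulr_ge0 //; case/andP: (psi_monomial01 psi01 f s).
transitivity (meanP P (fun s =>
  \sum_(f : {ffun 'I_k -> 'I_n}) n%:R^-1 ^+ k * (w s * psi_monomial psi f s))).
  congr (meanP P _); apply/funext => s; rewrite empavg_expn mulr_sumr.
  by apply: eq_bigr => f _; rewrite mulrCA.
rewrite meanP_sum // => [|f s]; last by rewrite mulr_ge0.
by apply: eq_bigr => f _; rewrite meanPZ.
Qed.

Lemma exp_on_out_le :
  (exp_on_out P A k psi <= (expR (k%:R * eps))%:E * pr_out P A psi *
     meanP P (fun t : n.-tuple X => (empavg t psi ^+ k)%R))%E.
Proof.
have mul1_meanP (w : n.-tuple X -> R) : meanP P w = meanP P (fun s => (1 * w s)%R).
  by congr (meanP P _); apply/funext => s; rewrite mul1r.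
rewrite exp_on_out_meanP (mul1_meanP (fun t => empavg t psi ^+ k)).
rewrite !meanP_empavg_expn // => [|s]; last first.
  exact: (rand_alg_ge0 hA).
rewrite ge0_sume_distrr => [|f _]; last first.
  rewrite mule_ge0 ?lee_fin ?exprn_ge0 ?invr_ge0 //.
  by apply: (meanP_ge0 hP) => s; rewrite mul1r; case/andP: (psi_monomial01 psi01 f s).
apply: lee_sum => f _; rewrite muleCA lee_wpmul2l ?lee_fin ?exprn_ge0 ?invr_ge0 //.
by rewrite -mul1_meanP; exact: meanP_psi_monomial_le.
Qed.

End Moments.

Theorem lemma3p1 (R : realType) (X : choiceType) (n : nat)
    (P : X -> R) (A : n.-tuple X -> (X -> R) -> R) (eps : R) :
  is_distr P ->
  rand_alg A ->
  differentially_private eps 0 A ->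
  forall (k : nat), (0 < k)%N ->
  forall psi : X -> R, (forall a, 0 <= psi a <= 1) ->
  (0 < pr_out P A psi)%E ->
  cond_moment P A k psi <= expR (k%:R * eps) * moment n P k psi.
Proof.
move=> hP hA hdp k k_gt0 psi psi01 out_gt0.
have A01 s : 0 <= A s psi <= 1 by rewrite (rand_alg_ge0 hA) (rand_alg_le1 hA).
have avg01 (s : n.-tuple X) : 0 <= empavg s psi ^+ k <= 1.
  by case/andP: (empavg01 psi01 s) => e0 e1; rewrite exprn_ge0 ?exprn_ile1.
apply: fine_div_le (exp_on_out_le hP hA hdp psi01 k_gt0) => //.
- rewrite exp_on_out_meanP; apply: (meanP_fin_num hP) => s.
  case/andP: (A01 s) => a0 a1; case/andP: (avg01 s) => e0 e1.
  by rewrite mulr_ge0 ?mulr_ile1.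
- exact: (meanP_fin_num hP).
- exact: (meanP_fin_num hP).
Qed.
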